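(* Let $G=(V,E)$ be a finite connected graph with $n=|V|$ and let $\{u,v\}\in E$ be a bridge, whose removal separates $G$ into two connected components $G_1$, $G_2$ with vertex sets $V_1\ni u$ and $V_2\ni v$. Assume that $DK=n\mathbf{1}_n$ has a unique solution $K_G:V\to\mathbb{R}$ (the Steinerberger curvature of $G$). Then $$\sum_{x\in V_1}K_G(x)=\sum_{y\in V_2}K_G(y).$$
   Context: All graphs are finite, simple, connected and undirected, with the combinatorial shortest-path distance $d$. For $G=(V,E)$ with $V=\{v_1,\dots,v_n\}$, let $D=(d(v_i,v_j))_{i,j=1}^n$ be its distance matrix and $\mathbf{1}_n\in\mathbb{R}^n$ the all-ones column vector. The Steinerberger curvature $K\in\mathbb{R}^n$ (written $K_i$ or $K(v_i)$) is defined as follows: if $DK=n\mathbf{1}_n$ has a unique solution, $K$ is that solution; if it has several solutions, $K$ is a solution for which $\min_i K_i$ is maximal; if it has no solution, $K=nD^\dagger\mathbf{1}_n$ with $D^\dagger$ the Moore–Penrose pseudoinverse. A bridge is an edge whose removal disconnects the graph. *)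

From mathcomp Require Import all_boot all_order all_algebra.
Set Implicit Arguments. Unset Strict Implicit. Unset Printing Implicit Defensive.
Import Order.TTheory GRing.Theory Num.Theory.

Definition simple_graph (T : finType) (e : rel T) : Prop :=
  irreflexive e /\ symmetric e.

Definition connected_graph (T : finType) (e : rel T) : Prop :=
  forall x y : T, connect e x y.

Fixpoint within (T : finType) (e : rel T) (k : nat) (x y : T) : bool :=
  match k with
  | 0 => x == y
  | k'.+1 => within e k' x y || [exists z, within e k' x z && e z y]
  end.

(* Combinatorial shortest-path distance: the least k such that a walk of
   length <= k exists (searched in 0 .. #|T|-1, which suffices for a
   connected graph). *)
Definition gdist (T : finType) (e : rel T) (x y : T) : nat :=
  find (fun k => within e k x y) (iota 0 #|T|).

Definition remove_edge (T : finType) (e : rel T) (u v : T) : rel T :=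
  fun x y => e x y && ~~ (((x == u) && (y == v)) || ((x == v) && (y == u))).

Definition is_bridge (T : finType) (e : rel T) (u v : T) : Prop :=
  e u v /\ ~~ connect (remove_edge e u v) u v.

Definition side (T : finType) (e : rel T) (u v w : T) : {set T} :=
  [set x | connect (remove_edge e u v) w x].

(* K solves D K = n 1_n, with D the distance matrix (rows/columns indexed by T). *)
Definition solves_curv (R : numDomainType) (T : finType) (e : rel T)
  (K : T -> R) : Prop :=
  forall x : T, (\sum_(y : T) ((gdist e x y)%:R * K y) = (#|T|)%:R)%R.

From mathcomp Require Import all_boot all_algebra.
Import GRing.Theory.

(* Every walk from v into the side of u crosses the bridge, and does so by the
   step v -> u, so d(v, z) = d(u, z) + 1 on the side of u and symmetrically
   d(u, z) = d(v, z) + 1 on the side of v.  Subtracting row u from row v of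
   D K = n 1 therefore gives sum_{V1} K - sum_{V2} K = n - n = 0. *)

Section Walks.

Variables (T : finType) (e : rel T).

Lemma withinS k x y :
  within e k.+1 x y = within e k x y || [exists z, within e k x z && e z y].
Proof. by []. Qed.

Lemma within_mono k m x y : k <= m -> within e k x y -> within e m x y.
Proof.
move=> /subnK <- wk; elim: (m - k) => [|d IH] //.
by rewrite addSn withinS IH.
Qed.

Lemma within_cons k w x y : e w x -> within e k x y -> within e k.+1 w y.
Proof.
move=> ewx; elim: k y => [|k IH] y.
  by move=> /eqP <-; rewrite withinS; apply/orP; right; apply/existsP; exists w;
    rewrite /= eqxx ewx.
rewrite withinS => /orP [wk | /existsP [z /andP [wz ezy]]].
  by rewrite withinS IH.
by rewrite withinS; apply/orP; right; apply/existsP; exists z; rewrite IH.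
Qed.

Lemma within_path x p : path e x p -> within e (size p) x (last x p).
Proof.
elim: p x => [|y p IH] x /=; first by rewrite eqxx.
by case/andP=> exy /IH; apply: within_cons.
Qed.

Lemma within_connect x y : connect e x y -> exists2 k, k < #|T| & within e k x y.
Proof.
case/connectP=> p ep ->; case: (shortenP ep) => p' ep' up' _.
exists (size p'); last exact: within_path.
by have := max_card (mem (x :: p')); rewrite (card_uniqP up').
Qed.

Lemma within_gdist x y : connect e x y -> within e (gdist e x y) x y.
Proof.
case/within_connect=> k ltkT wk.
have has_k : has (fun k => within e k x y) (iota 0 #|T|).
  by apply/hasP; exists k; rewrite ?mem_iota.
have := nth_find 0 has_k; rewrite nth_iota ?add0n //.
by move: has_k; rewrite has_find size_iota.
Qed.

Lemma gdist_le k x y : within e k x y -> gdist e x y <= k.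
Proof.
move=> wk; rewrite leqNgt; apply/negP => ltk.
have ltkT : k < #|T|.
  by rewrite (leq_trans ltk) // -[X in _ <= X](size_iota 0) find_size.
by have := before_find 0 ltk; rewrite nth_iota // add0n /= wk.
Qed.

End Walks.

Arguments within_mono {T e k m x y}.
Arguments within_cons {T e k w x y}.
Arguments within_gdist {T e x y}.
Arguments gdist_le {T e k x y}.

Lemma gdist_edge (T : finType) (e : rel T) x y z :
  e x y -> connect e y z -> gdist e x z <= (gdist e y z).+1.
Proof. by move=> exy /within_gdist yz; exact: gdist_le (within_cons exy yz). Qed.

Section RemoveEdge.

Context {T : finType} (e : rel T) (u v : T).

Lemma remove_edgeC : remove_edge e v u =2 remove_edge e u v.
Proof. by move=> x y; rewrite /remove_edge orbC. Qed.

Lemma sideC w : side e v u w = side e u v w.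
Proof. by apply/setP=> x; rewrite !inE (eq_connect remove_edgeC). Qed.

Lemma remove_edge_sym : symmetric e -> symmetric (remove_edge e u v).
Proof.
move=> e_sym x y; rewrite /remove_edge e_sym; congr (_ && ~~ _).
by rewrite orbC [(y == u) && _]andbC [(y == v) && _]andbC.
Qed.

Lemma remove_edge_endpoint x y :
  e x y -> ~~ remove_edge e u v x y -> (y == u) || (y == v).
Proof.
rewrite /remove_edge => -> /=; rewrite negbK.
by case/orP=> /andP [_ ->]; rewrite ?orbT.
Qed.

End RemoveEdge.

Arguments remove_edge_endpoint {T e u v x y}.

Section Bridge.

Context {T : finType} {e : rel T} {u v : T}.
Hypotheses (e_sym : symmetric e) (bridge : ~~ connect (remove_edge e u v) u v).

Local Notation e' := (remove_edge e u v).

Lemma connect_remove_edge_sym : connect_sym e'.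
Proof. exact/sym_connect_sym/remove_edge_sym. Qed.

Lemma side_disjoint z : z \in side e u v u -> z \notin side e u v v.
Proof.
rewrite !inE => uz; apply/negP => vz; move: bridge.
by rewrite (connect_trans uz) // connect_remove_edge_sym.
Qed.

(* A walk of length k from v to the side of u yields one of length k - 1 from
   u: the last step entering that side is the removed edge v -> u. *)
Lemma within_across_bridge k z :
  connect e' u z -> within e k v z -> (0 < k) && within e k.-1 u z.
Proof.
elim: k z => [|k IH] z uz.
  by move=> /eqP vz; rewrite -vz in uz; move: bridge; rewrite uz.
rewrite withinS => /orP [wk | /existsP [w /andP [ww ewz]]].
  by case/andP: (IH _ uz wk) => _ /(within_mono (leq_pred k)).
have [e'wz | /(remove_edge_endpoint ewz) /orP [/eqP zu | /eqP zv]] := boolP (e' w z).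
- have uw : connect e' u w.
    by apply: connect_trans uz (connect1 _); rewrite remove_edge_sym.
  case/andP: (IH _ uw ww) => k_gt0 wk /=.
  by rewrite -(prednK k_gt0) withinS; apply/orP; right; apply/existsP; exists w;
    rewrite wk ewz.
- have uu : within e 0 u u by rewrite /= eqxx.
  by rewrite zu /=; exact: within_mono (leq0n k) uu.
- by rewrite zv in uz; move: bridge; rewrite uz.
Qed.

Lemma gdist_across_bridge z :
  e u v -> connected_graph e -> z \in side e u v u ->
  gdist e v z = (gdist e u z).+1.
Proof.
move=> e_uv conn; rewrite inE => uz.
have le_vu : gdist e v z <= (gdist e u z).+1.
  by apply: gdist_edge; [rewrite e_sym | exact: conn].
have /andP [gt0 /gdist_le] := within_across_bridge _ _ uz (within_gdist (conn v z)).
by rewrite -ltnS prednK // => le_uv; apply/eqP; rewrite eqn_leq le_vu.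
Qed.

Lemma side_cover z :
  connected_graph e -> (z \in side e u v u) || (z \in side e u v v).
Proof.
move=> conn; rewrite !inE; case/connectP: (conn u z) => p ep ->.
suff cover_path x q : connect e' u x || connect e' v x -> path e x q ->
    connect e' u (last x q) || connect e' v (last x q).
  by apply: cover_path ep; rewrite connect0.
elim: q x => [|w q IH] x //= ux /andP [exw ewq]; apply: IH ewq.
have [e'xw | /(remove_edge_endpoint exw) /orP [] /eqP ->] := boolP (e' x w).
- by case/orP: ux => ux; apply/orP; [left | right];
    apply: connect_trans ux (connect1 e'xw).
- by rewrite connect0.
- by rewrite connect0 orbT.
Qed.

End Bridge.

Local Open Scope ring_scope.

Section Balance.

Context {T : finType} {e : rel T} {u v : T}.
Hypotheses (e_sym : symmetric e) (conn : connected_graph e) (e_uv : e u v).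
Hypothesis bridge : ~~ connect (remove_edge e u v) u v.

Lemma gdist_bridge_balance y :
  (gdist e v y + (y \in side e u v v) = gdist e u y + (y \in side e u v u))%N.
Proof.
have [yu | nyu] := boolP (y \in side e u v u).
  rewrite (negbTE (side_disjoint e_sym bridge _ yu)).
  by rewrite (gdist_across_bridge e_sym bridge) // addn0 addn1.
have bridge' : ~~ connect (remove_edge e v u) v u.
  by rewrite (eq_connect (remove_edgeC e u v)) connect_remove_edge_sym.
have yv : y \in side e u v v.
  by move: (side_cover (u:=u) (v:=v) y conn); rewrite (negbTE nyu).
have e_vu : e v u by rewrite e_sym.
by rewrite yv (gdist_across_bridge e_sym bridge' y e_vu conn) ?addn0 ?addn1 // sideC.
Qed.

Lemma sum_gdist_across_bridge (R : pzSemiRingType) (K : T -> R) :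
  \sum_y (gdist e v y)%:R * K y + \sum_(y in side e u v v) K y =
  \sum_y (gdist e u y)%:R * K y + \sum_(x in side e u v u) K x.
Proof.
have sum_side w : \sum_(y in side e u v w) K y = \sum_y (y \in side e u v w)%:R * K y.
  by rewrite big_mkcond; apply: eq_bigr => y _; case: (_ \in _); rewrite ?mul1r ?mul0r.
rewrite !sum_side -!big_split; apply: eq_bigr => y _ /=.
by rewrite -!mulrDl -!natrD gdist_bridge_balance.
Qed.

End Balance.

Theorem mainTheorem3 (R : realFieldType) (T : finType) (e : rel T) (u v : T)
  (K : T -> R) :
  simple_graph e -> connected_graph e -> is_bridge e u v ->
  solves_curv e K ->
  (forall K' : T -> R, solves_curv e K' -> K' =1 K) ->
  \sum_(x in side e u v u) K x = \sum_(y in side e u v v) K y.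
Proof.
move=> [_ e_sym] conn [e_uv bridge] solK _.
have := sum_gdist_across_bridge e_sym conn e_uv bridge _ K.
by rewrite !solK => /addrI ->.
Qed.
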